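(* For every $n\ge1$ there is a bijection $A\mapsto M$ from the set of admissible sets in $\{1,3,\dots,2n+1\}$ onto the set of Motzkin paths of length $n$ such that the weight of $A$, namely $\big(\prod_{i=1}^{2n}[a(i)]_q\big)t^{(|A|-1)/2}$, equals the weight $\rho(M)$ (product of step weights) of $M$, where an up step at height $h\ge0$ has weight $[h+1]_q[h+2]_q\,t$, a level step at height $h\ge0$ has weight $[h+1]_q^2$, and a down step at height $h\ge1$ has weight $[h+1]_q[h]_q$.
   Context: $[k]_q=1+q+\cdots+q^{k-1}$. An admissible set in $\{1,3,\dots,2n+1\}$ is a set $A$ of odd numbers in $\{1,3,\dots,2n+1\}$, each colored white or black, such that: (i) $A$ has $k$ white and $k+1$ black elements for some $k\ge0$, and $2n+1$ is black; (ii) for each $i\in[2n]$, $A\cap\{1,\dots,i\}$ has at least as many white as black elements. Its vector is $a(i)=f(i)-g(i)+1$ ($1\le i\le 2n$), where $f(i)$ (resp. $g(i)$) is the number of white (resp. black) elements of $A$ less than $i$. A Motzkin path of length $n$ is a lattice path from $(0,0)$ to $(n,0)$ staying weakly above the $x$-axis with steps up $(1,1)$, down $(1,-1)$, level $(1,0)$; the height of a step is the $y$-coordinate of its starting point. *)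

From HB Require Import structures.
From mathcomp Require Import all_boot all_order all_algebra.
Set Implicit Arguments. Unset Strict Implicit. Unset Printing Implicit Defensive.
Import GRing.Theory.
Local Open Scope ring_scope.

(* Weights live in Z[q][t] = {poly {poly int}}: the outer variable is t = 'X,
   q is the constant polynomial ('X)%:P. *)
Definition qint (k : nat) : {poly int} := \sum_(m < k) 'X^m.
Definition Q : {poly {poly int}} := ('X : {poly int})%:P.
Definition T : {poly {poly int}} := 'X.
Definition qintT (k : nat) : {poly {poly int}} := (qint k)%:P.

(* A colored subset of {1,3,...,2n+1}: index j : 'I_(n+1) stands for the odd
   number 2j+1; None = not in A, Some true = white, Some false = black. *)
Definition colset (n : nat) := {ffun 'I_n.+1 -> option bool}.

Definition fA n (A : colset n) (i : nat) : nat :=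
  #|[set j : 'I_n.+1 | (A j == Some true) && ((2 * j).+1 < i)%N]|.
Definition gA n (A : colset n) (i : nat) : nat :=
  #|[set j : 'I_n.+1 | (A j == Some false) && ((2 * j).+1 < i)%N]|.

Definition nwhite n (A : colset n) : nat := #|[set j | A j == Some true]|.
Definition nblack n (A : colset n) : nat := #|[set j | A j == Some false]|.

Definition admissible n (A : colset n) : Prop :=
  nblack A = (nwhite A).+1 /\ A ord_max = Some false /\
  (forall i : nat, (1 <= i <= 2 * n)%N ->
     (#|[set j : 'I_n.+1 | (A j == Some false) && ((2 * j).+1 <= i)%N]|
      <= #|[set j : 'I_n.+1 | (A j == Some true) && ((2 * j).+1 <= i)%N]|)%N).

(* a(i) = f(i) - g(i) + 1 (nonnegative for admissible A) *)
Definition avec n (A : colset n) (i : nat) : nat := (fA A i + 1 - gA A i)%N.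

(* |A| = 2k+1, so (|A|-1)/2 = k = number of white elements *)
Definition weightA n (A : colset n) : {poly {poly int}} :=
  (\prod_(1 <= i < (2 * n).+1) qintT (avec A i)) * T ^+ nwhite A.

Inductive step := Up | Lev | Down.

Fixpoint valid_from (h : nat) (M : seq step) : bool :=
  match M with
  | [::] => h == 0%N
  | Up :: M' => valid_from h.+1 M'
  | Lev :: M' => valid_from h M'
  | Down :: M' => (0 < h)%N && valid_from h.-1 M'
  end.

Definition motzkin (n : nat) (M : seq step) : Prop :=
  size M = n /\ valid_from 0 M.

Fixpoint rho_from (h : nat) (M : seq step) : {poly {poly int}} :=
  match M with
  | [::] => 1
  | Up :: M' => qintT h.+1 * qintT h.+2 * T * rho_from h.+1 M'
  | Lev :: M' => qintT h.+1 ^+ 2 * rho_from h M'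
  | Down :: M' => qintT h.+1 * qintT h * rho_from h.-1 M'
  end.

Definition rho (M : seq step) : {poly {poly int}} := rho_from 0 M.

(* Reading the colours of 1, 3, ..., 2n-1 from left to right and turning a
   white element into an up step, a black one into a down step and an absent
   one into a level step gives a word [word A] of length n; the last element
   2n+1 is forced to be black.  Condition (ii) of admissibility is then the
   ballot condition "every prefix has at least as many up as down steps" and
   condition (i) says that the word has as many up as down steps, i.e. that
   [word A] is a Motzkin path (Lemmas [valid_fromP], [admissible_word]).

   For the weights, a(2j+1) - 1 and a(2j+2) - 1 are the heights of the path
   before and after its j-th step ([avec_height]), so the product of the
   [a(i)]_q pairs up into one factor [h+1]_q [h'+1]_q per step, which is
   exactly the step weight of rho ([rho_from_heights]); the power of t is the
   number of white elements, i.e. of up steps.  The map [word] is injective on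
   colourings whose last entry is black and every path is reached by the
   colouring [colset_of_path], which gives the bijection. *)

From HB Require Import structures.
From mathcomp Require Import all_boot all_order all_algebra zify ring.
Set Implicit Arguments. Unset Strict Implicit. Unset Printing Implicit Defensive.
Import GRing.Theory.

(* Colours and steps are in bijection: white = up, black = down, absent = level;
   through it [step] inherits a decidable equality, so steps can be counted. *)
Definition tostep (o : option bool) : step :=
  match o with Some true => Up | Some false => Down | None => Lev end.
Definition fromstep (x : step) : option bool :=
  match x with Up => Some true | Down => Some false | Lev => None end.

Lemma fromstepK : cancel fromstep tostep. Proof. by case. Qed.
Lemma tostepK : cancel tostep fromstep. Proof. by case=> [[]|]. Qed.
Lemma tostep_inj : injective tostep. Proof. exact: can_inj tostepK. Qed.

HB.instance Definition _ := Equality.copy step (can_type fromstepK).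

Lemma count_map_tostep (c : option bool) (s : seq (option bool)) :
  count_mem (tostep c) (map tostep s) = count_mem c s.
Proof. by rewrite count_map; apply: eq_count => d /=; rewrite (inj_eq tostep_inj). Qed.

Definition height (h : nat) (M : seq step) (k : nat) : nat :=
  h + count_mem Up (take k M) - count_mem Down (take k M).

Definition after (h : nat) (x : step) : nat :=
  match x with Up => h.+1 | Lev => h | Down => h.-1 end.

Lemma height0 (h : nat) (M : seq step) : height h M 0 = h.
Proof. by rewrite /height take0 /= addn0 subn0. Qed.

Lemma height_cons (h : nat) (x : step) (M : seq step) (k : nat) :
  (x = Down -> 0 < h) -> height h (x :: M) k.+1 = height (after h x) M k.
Proof. by rewrite /height; case: x => /= hpos; [lia | lia | have := hpos erefl; lia]. Qed.

Lemma valid_fromP (h : nat) (M : seq step) : valid_from h M <->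
  (forall k, count_mem Down (take k M) <= h + count_mem Up (take k M))
  /\ h + count_mem Up M = count_mem Down M.
Proof.
elim: M h => [|x M IH] h /=.
  split; first by move/eqP=> ->; split => // k; rewrite take_nil.
  by case=> _; rewrite addn0 => ->.
case: x; last case: h => [|h]; rewrite /=.
3: by split=> // -[H1 _]; have := H1 1; rewrite /= take0.
all: rewrite IH; split=> -[H1 H2]; move: H1 H2 => /= H1 H2; (split; last by lia).
all: first [by case=> [|k] //=; have := H1 k; lia
           | by move=> k; have := H1 k.+1; rewrite /=; lia].
Qed.

Lemma rho_from_heights (h : nat) (M : seq step) : valid_from h M ->
  rho_from h M =
  (\prod_(j < size M) (qintT (height h M j).+1 * qintT (height h M j.+1).+1)
   * T ^+ count_mem Up M)%R.
Proof.
elim: M h => [|x M IH] h /=; first by rewrite big_ord0 mul1r.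
move=> V; have hpos : x = Down -> 0 < h by case: x V => //= /andP[].
rewrite big_ord_recl height0 height_cons //.
under eq_bigr => i _ do rewrite lift0 !height_cons //.
rewrite height0; case: x V {hpos} => /= V.
- by rewrite IH // exprS; ring.
- by rewrite IH // add0n; ring.
- by case/andP: V => hp V; rewrite IH // add0n prednK //; ring.
Qed.

Lemma prod_pairs (R : pzSemiRingType) (F : nat -> R) (n : nat) :
  (\prod_(1 <= i < (2 * n).+1) F i
   = \prod_(j < n) (F (2 * j).+1 * F (2 * j).+2))%R.
Proof.
elim: n => [|n IH]; first by rewrite big_ord0 big_geq.
rewrite mulnS big_nat_recr // big_nat_recr // IH big_ord_recr /=.
by rewrite mulrA.
Qed.

Definition colors (n : nat) (A : colset n) : seq (option bool) :=
  [seq A (inord j) | j <- iota 0 n.+1].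
Definition word (n : nat) (A : colset n) : seq step :=
  map tostep (take n (colors A)).

Lemma size_word (n : nat) (A : colset n) : size (word A) = n.
Proof. by rewrite size_map size_takel // size_map size_iota. Qed.

Lemma nth_colors (n : nat) (A : colset n) (j : nat) :
  j < n.+1 -> nth None (colors A) j = A (inord j).
Proof. by move=> hj; rewrite (nth_map 0) ?size_iota // nth_iota. Qed.

Lemma colors_rcons (n : nat) (A : colset n) :
  colors A = rcons (take n (colors A)) (A ord_max).
Proof.
have -> : A ord_max = nth None (colors A) n.
  by rewrite nth_colors //; congr (A _); apply: val_inj; rewrite /= inordK.
by rewrite -take_nth ?take_oversize // size_map size_iota.
Qed.

Lemma take_word (n : nat) (A : colset n) (k : nat) :
  k <= n -> take k (word A) = map tostep (take k (colors A)).
Proof. by move=> hk; rewrite -map_take take_takel. Qed.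

Lemma card_color_prefix (n : nat) (A : colset n) (c : option bool) (k : nat)
    (Q : pred 'I_n.+1) :
  Q =1 (fun j => (A j == c) && (j < k)) ->
  #|[set j | Q j]| = count_mem c (take k (colors A)).
Proof.
move=> hQ; rewrite cardsE cardE /enum_mem size_filter -enumT (eq_count hQ).
have -> : count (fun j : 'I_n.+1 => (A j == c) && (j < k)) (enum 'I_n.+1)
    = count (fun j => (A (inord j) == c) && (j < k)) (iota 0 n.+1).
  by rewrite -val_enum_ord count_map; apply: eq_count => j /=; rewrite inord_val.
rewrite -count_filter -map_take take_iota count_map.
case: (leqP k n.+1) => hk; first by have := filter_iota_ltn 0 hk; rewrite add0n => ->.
rewrite (eq_in_filter (a2 := predT)) ?filter_predT //.
by move=> j; rewrite mem_iota => /andP[_ /= hj]; lia.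
Qed.

Lemma odd_ltn (i j : nat) : ((2 * j).+1 < i) = (j < i %/ 2).
Proof. by apply/idP/idP; lia. Qed.

Lemma fA_word (n : nat) (A : colset n) (i : nat) :
  i %/ 2 <= n -> fA A i = count_mem Up (take (i %/ 2) (word A)).
Proof.
move=> hi; rewrite take_word // (count_map_tostep (Some true)).
by apply: card_color_prefix => j; rewrite odd_ltn.
Qed.

Lemma gA_word (n : nat) (A : colset n) (i : nat) :
  i %/ 2 <= n -> gA A i = count_mem Down (take (i %/ 2) (word A)).
Proof.
move=> hi; rewrite take_word // (count_map_tostep (Some false)).
by apply: card_color_prefix => j; rewrite odd_ltn.
Qed.

Lemma card_color (n : nat) (A : colset n) (c : option bool) :
  #|[set j | A j == c]| = count_mem (tostep c) (word A) + (A ord_max == c).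
Proof.
rewrite count_map_tostep (@card_color_prefix _ A c n.+1) => [|j]; last first.
  by rewrite ltn_ord andbT.
rewrite take_oversize ?size_map ?size_iota //.
by rewrite {1}colors_rcons -cats1 count_cat /= addn0.
Qed.

Lemma nwhite_word (n : nat) (A : colset n) :
  A ord_max = Some false -> nwhite A = count_mem Up (word A).
Proof. by move=> hA; rewrite /nwhite (card_color _ (Some true)) hA addn0. Qed.

Lemma nblack_word (n : nat) (A : colset n) :
  A ord_max = Some false -> nblack A = (count_mem Down (word A)).+1.
Proof. by move=> hA; rewrite /nblack (card_color _ (Some false)) hA eqxx addn1. Qed.

Lemma admissible_word (n : nat) (A : colset n) :
  admissible A <-> A ord_max = Some false /\ valid_from 0 (word A).
Proof.
split=> [[hcard [hmax hballot]] | [hmax /valid_fromP[hprefix htotal]]].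
- have htotal : count_mem Up (word A) = count_mem Down (word A).
    by move: hcard; rewrite nwhite_word // nblack_word // => -[].
  split=> //; apply/valid_fromP; rewrite add0n; split=> // k.
  case: (leqP k n) => hk; last by rewrite take_oversize ?size_word ?htotal // ltnW.
  case: k hk => [|k] hk; first by rewrite take0.
  have hi : 1 <= (2 * k).+1 <= 2 * n by lia.
  have : gA A (2 * k).+2 <= fA A (2 * k).+2 := hballot _ hi.
  by rewrite fA_word ?gA_word; have -> : (2 * k).+2 %/ 2 = k.+1 by lia.
- split; first by rewrite nwhite_word // nblack_word // -htotal.
  split=> // i /andP[_ hi].
  change (gA A i.+1 <= fA A i.+1).
  by rewrite fA_word ?gA_word; [exact: hprefix | lia | lia].
Qed.

Lemma avec_height (n : nat) (A : colset n) (i : nat) :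
  valid_from 0 (word A) -> i %/ 2 <= n ->
  avec A i = (height 0 (word A) (i %/ 2)).+1.
Proof.
move=> /valid_fromP[hprefix _] hi; have := hprefix (i %/ 2).
by rewrite /avec /height fA_word ?gA_word // !add0n addn1 => /subSn.
Qed.

Lemma weight_word (n : nat) (A : colset n) :
  admissible A -> weightA A = rho (word A).
Proof.
move=> /admissible_word[hmax V].
rewrite /weightA /rho rho_from_heights // size_word nwhite_word //.
congr (_ * _)%R; rewrite prod_pairs; apply: eq_bigr => j _.
have hj := ltn_ord j.
have [hodd heven] : (2 * j).+1 %/ 2 = j /\ (2 * j).+2 %/ 2 = j.+1 by lia.
by rewrite !avec_height ?hodd ?heven // ltnW.
Qed.

Lemma word_inj (n : nat) (A B : colset n) :
  A ord_max = B ord_max -> word A = word B -> A = B.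
Proof.
move=> hlast /(inj_map tostep_inj) htake.
have hcol : colors A = colors B by rewrite colors_rcons htake hlast -colors_rcons.
apply/ffunP=> j; have := congr1 (nth None ^~ j) hcol.
by rewrite /= !nth_colors // inord_val.
Qed.

Definition colset_of_path (n : nat) (M : seq step) : colset n :=
  [ffun j : 'I_n.+1 => if j < n then fromstep (nth Lev M j) else Some false].

Lemma colset_of_path_last (n : nat) (M : seq step) :
  colset_of_path n M ord_max = Some false.
Proof. by rewrite ffunE /= ltnn. Qed.

Lemma word_colset_of_path (n : nat) (M : seq step) :
  size M = n -> word (colset_of_path n M) = M.
Proof.
move=> hM; apply: (@eq_from_nth _ Lev); first by rewrite size_word.
move=> j; rewrite size_word => hj.
rewrite (nth_map None) ?size_takel ?size_map ?size_iota // nth_take //.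
by rewrite nth_colors ?ffunE ?inordK ?hj ?fromstepK //; lia.
Qed.

Theorem mainTheorem8 (n : nat) (hn : (1 <= n)%N) :
  exists f : colset n -> seq step,
    (forall A, admissible A -> motzkin n (f A)) /\
    (forall A B, admissible A -> admissible B -> f A = f B -> A = B) /\
    (forall M, motzkin n M -> exists2 A, admissible A & f A = M) /\
    (forall A, admissible A -> weightA A = rho (f A)).
Proof.
exists (@word n); split; [|split; [|split]].
- by move=> A /admissible_word[_ V]; split; [exact: size_word | exact: V].
- move=> A B /admissible_word[hA _] /admissible_word[hB _].
  by apply: word_inj; rewrite hA hB.
- move=> M [hsize V]; exists (colset_of_path n M); last exact: word_colset_of_path.
  apply/admissible_word; split; first exact: colset_of_path_last.
  by rewrite word_colset_of_path.
- exact: weight_word.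
Qed.
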